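(* There exists a $4\times 4$ Jacobi matrix $J$ that realizes perfect state transfer and has Early State Exclusion; i.e., if $T_0>0$ is the earliest time at which $J$ realizes perfect state transfer, then there is $t\in(0,T_0)$ with $(e^{-iJt}\mathbf{e}_0,\mathbf{e}_0)_{\mathbb{C}^{4}}=0$.
   Context: A Jacobi matrix of order $N+1$ is a real symmetric tridiagonal $(N+1)\times(N+1)$ matrix $J$ with diagonal entries $a_0,\dots,a_N\in\mathbb{R}$ and off-diagonal entries $b_0,\dots,b_{N-1}>0$. Let $\mathbf{e}_0,\dots,\mathbf{e}_N$ be the standard basis of $\mathbb{C}^{N+1}$. $J$ realizes perfect state transfer (PST) at time $T>0$ if $e^{-iTJ}\mathbf{e}_0=e^{i\phi}\mathbf{e}_N$ for some $\phi\in\mathbb{R}$. If $T_0$ is the earliest (smallest positive) such time, $J$ is said to have Early State Exclusion (ESE) at time $t$ if $0<t<T_0$ and $(e^{-iJt}\mathbf{e}_0,\mathbf{e}_0)_{\mathbb{C}^{N+1}}=0$. *)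

From HB Require Import structures.
From mathcomp Require Import all_boot all_order all_algebra.
From mathcomp Require Import all_classical all_reals all_analysis.
Set Implicit Arguments. Unset Strict Implicit. Unset Printing Implicit Defensive.
Import Order.TTheory GRing.Theory Num.Theory numFieldNormedType.Exports.
Local Open Scope ring_scope.

Definition jacobi (R : realType) (n : nat) (J : 'M[R]_n.+1) : Prop :=
  [/\ forall i j : 'I_n.+1, J i j = J j i,
      forall i j : 'I_n.+1, (i.+1 < j)%N -> J i j = 0
    & forall i j : 'I_n.+1, j = i.+1 :> nat -> 0 < J i j].

(* e^{-itJ} = sum_k (-it)^k J^k / k!, split into real and imaginary parts
   (J is real):
   Re = sum_m (-1)^m t^(2m) J^(2m) / (2m)!,
   Im = sum_m (-1)^(m+1) t^(2m+1) J^(2m+1) / (2m+1)!.  Entrywise series, as limits of partial sums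
   (these series converge for every t). *)
Definition evolRe (R : realType) (n : nat) (J : 'M[R]_n.+1) (t : R)
    (i j : 'I_n.+1) : R :=
  limn (fun N : nat => \sum_(m < N) (((-1) ^+ m * t ^+ (2 * m)%N / ((2 * m)%N`!)%:R) * (J ^+ (2 * m)%N) i j)).

Definition evolIm (R : realType) (n : nat) (J : 'M[R]_n.+1) (t : R)
    (i j : 'I_n.+1) : R :=
  limn (fun N : nat => \sum_(m < N) (((-1) ^+ m.+1 * t ^+ (2 * m)%N.+1 / ((2 * m)%N.+1`!)%:R)
                 * (J ^+ (2 * m)%N.+1) i j)).

(* Perfect state transfer at time T: e^{-iTJ} e_0 = e^{i phi} e_N. *)
Definition PST (R : realType) (n : nat) (J : 'M[R]_n.+1) (T : R) : Prop :=
  0 < T /\ exists phi : R, forall j : 'I_n.+1,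
    evolRe J T j ord0 = (if j == ord_max then cos phi else 0) /\
    evolIm J T j ord0 = (if j == ord_max then sin phi else 0).

Definition return_amp_zero (R : realType) (n : nat) (J : 'M[R]_n.+1) (t : R)
  : Prop := evolRe J t ord0 ord0 = 0 /\ evolIm J t ord0 ord0 = 0.

From HB Require Import structures.
From mathcomp Require Import all_boot all_order all_algebra.
From mathcomp Require Import all_classical all_reals all_analysis.
From mathcomp Require Import ring lra zify.
Import Order.TTheory GRing.Theory Num.Theory numFieldNormedType.Exports.

(* The matrix J4 with zero diagonal and off-diagonal entries (√15, 2, √15) has
   spectrum {±3, ±5}.  Expanding e_0 over its eigenvectors turns the series
   defining e^{-itJ} into cosines and sines of 3t and 5t.  At t = π/2 every
   cosine vanishes and the first column is -i e_3, so the state is transferred.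
   No earlier T works: the entries of index 0, 1 and 2 would force
   e^{5iT} = e^{-3iT} and cos 3T = 0, hence cos 2T = -1.  The return amplitude
   (5 cos 3t + 3 cos 5t)/8 = cos³t (6 cos²t - 5) already vanishes at
   t = arccos √(5/6) < π/2. *)

Local Open Scope classical_set_scope.
Local Open Scope ring_scope.

Section Series.
Context {R : realType}.

Lemma cvg_cos_series (t a : R) :
  (fun N => \sum_(m < N) ((-1) ^+ m * t ^+ (2 * m)%N / ((2 * m)%N`!)%:R) * a ^+ (2 * m)%N)
    @ \oo --> cos (a * t).
Proof.
have -> : (fun N => \sum_(m < N) ((-1) ^+ m * t ^+ (2 * m)%N / ((2 * m)%N`!)%:R) * a ^+ (2 * m)%N)
    = series (cos_coeff' (a * t)).
  apply/funext => N; rewrite seriesEord; apply: eq_bigr => m _.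
  rewrite /cos_coeff' -mul2n exprMn -exprnP; ring.
exact: cvg_cos_coeff'.
Qed.

Lemma cvg_sin_series (t a : R) :
  (fun N => \sum_(m < N) ((-1) ^+ m.+1 * t ^+ (2 * m)%N.+1 / ((2 * m)%N.+1`!)%:R) * a ^+ (2 * m)%N.+1)
    @ \oo --> - sin (a * t).
Proof.
have -> : (fun N => \sum_(m < N) ((-1) ^+ m.+1 * t ^+ (2 * m)%N.+1 / ((2 * m)%N.+1`!)%:R) * a ^+ (2 * m)%N.+1)
    = (fun N => - series (sin_coeff' (a * t)) N).
  apply/funext => N; rewrite seriesEord -sumrN; apply: eq_bigr => m _.
  rewrite /sin_coeff' -mul2n exprMn -exprnP exprS; ring.
by apply: cvgN; exact: cvg_sin_coeff'.
Qed.

Lemma cvg_sum_seq (I : Type) (r : seq I) (u : I -> nat -> R) (l : I -> R) :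
  (forall x, u x @ \oo --> l x) ->
  (fun N => \sum_(x <- r) u x N) @ \oo --> \sum_(x <- r) l x.
Proof. by move=> ul; apply: cvg_big => //; exact: add_continuous. Qed.

Lemma cos3_cos5 (x : R) :
  5 * cos (3 * x) + 3 * cos (5 * x) = 8 * cos x ^+ 3 * (6 * cos x ^+ 2 - 5).
Proof.
have rec y : cos (y + x) = 2 * cos x * cos y - cos (y - x) by rewrite cosD cosB; ring.
have c2 : cos (2 * x) = 2 * cos x ^+ 2 - 1 by rewrite mulr_natl cos_mulr2n; ring.
have c3 : cos (3 * x) = 2 * cos x * cos (2 * x) - cos x.
  have -> : 3 * x = 2 * x + x by ring.
  by rewrite rec; congr (_ - cos _); ring.
have c4 : cos (4 * x) = 2 * cos x * cos (3 * x) - cos (2 * x).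
  have -> : 4 * x = 3 * x + x by ring.
  by rewrite rec; congr (_ - cos _); ring.
have c5 : cos (5 * x) = 2 * cos x * cos (4 * x) - cos (3 * x).
  have -> : 5 * x = 4 * x + x by ring.
  by rewrite rec; congr (_ - cos _); ring.
rewrite c5 c4 c3 c2; ring.
Qed.

Lemma acos_lt_pihalf (x : R) : 0 < x <= 1 -> acos x < pi / 2.
Proof.
move=> /andP [x_gt0 x_le1]; have x_bnd : -1 <= x <= 1 by apply/andP; split; lra.
rewrite ltNge; apply/negP => acos_ge.
have acos_le := acos_lepi x_bnd.
have : 0 <= cos (acos x - pi).
  by apply: cos_ge0_pihalf; apply/andP; split; lra.
have := cosDpi (acos x - pi); rewrite subrK acosK ?in_itv //=; lra.
Qed.

End Series.

Section EigenExpansion.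
Context {R : realType} {n : nat} {J : 'M[R]_n.+1}.

Lemma mulmx_exp_eigen {a : R} {v : 'cV[R]_n.+1} :
  J *m v = a *: v -> forall k, J ^+ k *m v = a ^+ k *: v.
Proof.
move=> Jv; elim=> [|k IHk]; first by rewrite expr0 mul1mx scale1r.
by rewrite exprSr -mulmxE -mulmxA Jv -scalemxAr IHk scalerA -exprS.
Qed.

Context {modes : seq (R * 'cV[R]_n.+1)}.
Hypothesis modes_eigen : {in modes, forall m, J *m m.2 = m.1 *: m.2}.
Context {i : 'I_n.+1}.
Hypothesis delta_modes : delta_mx i 0 = \sum_(m <- modes) m.2.

Lemma exp_mx_modes k j : (J ^+ k) j i = \sum_(m <- modes) m.1 ^+ k * m.2 j 0.
Proof.
have -> : (J ^+ k) j i = (J ^+ k *m delta_mx i (0 : 'I_1)) j 0 by rewrite -colE mxE.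
rewrite delta_modes mulmx_sumr summxE; apply: eq_big_seq => m /modes_eigen Jm.
by rewrite (mulmx_exp_eigen Jm) mxE.
Qed.

Lemma limn_series_modes {c : nat -> R} {e : nat -> nat} {f : R -> R} j :
  (forall a, (fun N => \sum_(m < N) c m * a ^+ e m) @ \oo --> f a) ->
  limn (fun N => \sum_(m < N) c m * (J ^+ e m) j i) =
    \sum_(p <- modes) p.2 j 0 * f p.1.
Proof.
move=> cvg_f; apply: cvg_lim => //.
have -> : (fun N => \sum_(m < N) c m * (J ^+ e m) j i) =
    (fun N => \sum_(p <- modes) p.2 j 0 * \sum_(m < N) c m * p.1 ^+ e m).
  apply/funext => N; under eq_bigr do rewrite exp_mx_modes mulr_sumr.
  rewrite exchange_big /=; apply: eq_bigr => p _.
  by rewrite mulr_sumr; apply: eq_bigr => m _; ring.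
by apply: cvg_sum_seq => p; apply: cvgMl_tmp.
Qed.

Lemma evolRe_modes t j :
  evolRe J t j i = \sum_(p <- modes) p.2 j 0 * cos (p.1 * t).
Proof.
apply: (limn_series_modes (c := fun m => (-1) ^+ m * t ^+ (2 * m)%N / ((2 * m)%N`!)%:R)
  (e := fun m => (2 * m)%N) (f := fun a => cos (a * t))).
exact: cvg_cos_series.
Qed.

Lemma evolIm_modes t j :
  evolIm J t j i = \sum_(p <- modes) p.2 j 0 * - sin (p.1 * t).
Proof.
apply: (limn_series_modes
  (c := fun m => (-1) ^+ m.+1 * t ^+ (2 * m)%N.+1 / ((2 * m)%N.+1`!)%:R)
  (e := fun m => (2 * m)%N.+1) (f := fun a => - sin (a * t))).
exact: cvg_sin_series.
Qed.

End EigenExpansion.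

Section Example.
Variable R : realType.

Let s : R := Num.sqrt 15.

Lemma sqr_s : s ^+ 2 = 15. Proof. by rewrite sqr_sqrtr // ler0n. Qed.
Lemma s_gt0 : 0 < s. Proof. by rewrite sqrtr_gt0 ltr0n. Qed.

Definition J4 : 'M[R]_4 := \matrix_(i, j)
  if (i == j.+1 :> nat) || (j == i.+1 :> nat) then
    if (i + j == 3)%N then 2 else s
  else 0.

Definition col4 (a b c d : R) : 'cV[R]_4 := \col_i [:: a; b; c; d]`_i.

(* Each vector is the orthogonal projection of e_0 onto the eigenline of its eigenvalue. *)
Definition J4_modes : seq (R * 'cV[R]_4) :=
  [:: (3, 16^-1 *: col4 5 s (- s) (-5)); (-3, 16^-1 *: col4 5 (- s) (- s) 5);
      (5, 16^-1 *: col4 3 s s 3); (-5, 16^-1 *: col4 3 (- s) s (-3))].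

Lemma J4_modes_eigen : {in J4_modes, forall m, J4 *m m.2 = m.1 *: m.2}.
Proof.
have s2 := sqr_s.
move=> m; rewrite !inE => /or4P [] /eqP -> /=; apply/matrixP => i j;
  rewrite !mxE !big_ord_recl big_ord0 !mxE;
  by case: i => [[|[|[|[|i]]]] Hi] //=; field: s2.
Qed.

Lemma J4_delta_modes : delta_mx 0 0 = \sum_(m <- J4_modes) m.2.
Proof.
apply/matrixP => i j; rewrite ord1 !big_cons big_nil !mxE.
by case: i => [[|[|[|[|i]]]] Hi] //=; field.
Qed.

Lemma J4_evolRe t (j : 'I_4) : evolRe J4 t j 0 =
  [:: (5 * cos (3 * t) + 3 * cos (5 * t)) / 8; 0; s * (cos (5 * t) - cos (3 * t)) / 8; 0]`_j.
Proof.
rewrite (evolRe_modes J4_modes_eigen J4_delta_modes) !big_cons big_nil !mxE /=.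
by rewrite !mulNr !cosN; case: j => [[|[|[|[|j]]]] Hj] //=; field.
Qed.

Lemma J4_evolIm t (j : 'I_4) : evolIm J4 t j 0 =
  [:: 0; - s * (sin (3 * t) + sin (5 * t)) / 8; 0; (5 * sin (3 * t) - 3 * sin (5 * t)) / 8]`_j.
Proof.
rewrite (evolIm_modes J4_modes_eigen J4_delta_modes) !big_cons big_nil !mxE /=.
by rewrite !mulNr !sinN; case: j => [[|[|[|[|j]]]] Hj] //=; field.
Qed.

Lemma J4_jacobi : jacobi J4.
Proof.
split.
- by move=> i j; rewrite !mxE orbC addnC.
- move=> i j ij; rewrite mxE; case: ifP => // /orP [] /eqP; lia.
- move=> i j ji; rewrite mxE ji eqxx orbT; case: ifP => _; [exact: ltr0n | exact: s_gt0].
Qed.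

Lemma J4_PST : PST J4 (pi / 2).
Proof.
have [c3 s3] : cos (3 * (pi / 2)) = 0 :> R /\ sin (3 * (pi / 2)) = -1 :> R.
  have -> : 3 * (pi / 2) = pi / 2 + pi :> R by field.
  by rewrite cosDpi sinDpi cos_pihalf sin_pihalf oppr0.
have [c5 s5] : cos (5 * (pi / 2)) = 0 :> R /\ sin (5 * (pi / 2)) = 1 :> R.
  have -> : 5 * (pi / 2) = pi / 2 + pi *+ 2 :> R by rewrite mulr2n; field.
  by rewrite cosD2pi sinD2pi cos_pihalf sin_pihalf.
split; first by have := @pi_gt0 R; lra.
exists (- (pi / 2)) => j; rewrite J4_evolRe J4_evolIm c3 s3 c5 s5.
rewrite cosN sinN cos_pihalf sin_pihalf.
by case: j => [[|[|[|[|j]]]] Hj] //=; split; field.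
Qed.

Lemma J4_PST_min T : PST J4 T -> pi / 2 <= T.
Proof.
move=> [T_gt0 [phi PST_T]]; rewrite leNgt; apply/negP => T_lt.
have [re0 _] := PST_T ord0.
have [_ im1] := PST_T (@Ordinal 4 1 isT).
have [re2 _] := PST_T (@Ordinal 4 2 isT).
rewrite !J4_evolRe /= in re0 re2; rewrite J4_evolIm /= in im1.
have s_neq0 : s != 0 by rewrite gt_eqF ?s_gt0.
have c5 : cos (5 * T) = cos (3 * T) by apply: (mulfI s_neq0); lra.
have s5 : sin (5 * T) = - sin (3 * T) by apply: (mulfI s_neq0); lra.
have c3 : cos (3 * T) = 0 by lra.
have c2 : cos (T *+ 2) = -1.
  have -> : T *+ 2 = 5 * T - 3 * T by rewrite mulr2n; ring.
  have := cos2Dsin2 (3 * T); rewrite cosB c5 s5 c3; lra.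
have cT : 0 < cos T by apply: cos_gt0_pihalf; have := @pi_gt0 R; lra.
have : cos T ^+ 2 = 0 by move: c2; rewrite cos_mulr2n; lra.
by move/eqP; rewrite sqrf_eq0 gt_eqF.
Qed.

Lemma J4_return_amp_zero t : cos t ^+ 2 = 5 / 6 -> return_amp_zero J4 t.
Proof.
move=> cos_t; rewrite /return_amp_zero J4_evolRe J4_evolIm /=.
by rewrite cos3_cos5 cos_t; split => //; field.
Qed.

End Example.

Theorem mainTheorem2 (R : realType) :
  exists (J : 'M[R]_4) (T0 t : R),
    [/\ jacobi J,
        PST J T0,
        (forall T : R, PST J T -> T0 <= T),
        0 < t < T0
      & return_amp_zero J t].
Proof.
pose c : R := Num.sqrt (5 / 6).
have c_gt0 : 0 < c by rewrite sqrtr_gt0 divr_gt0.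
have c_lt1 : c < 1 by rewrite -sqrtr1 ltr_sqrt //; lra.
exists (J4 R), (pi / 2), (acos c); split.
- exact: J4_jacobi.
- exact: J4_PST.
- exact: J4_PST_min.
- by rewrite acos_gt0 ?acos_lt_pihalf //; apply/andP; split; lra.
- apply: J4_return_amp_zero.
  by rewrite acosK ?sqr_sqrtr ?in_itv //=; apply/andP; split; lra.
Qed.
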